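(* Let $X$ be a nonempty set and let $g,g_1\in\Gamma(X)$ with $g$ of height at least $2$. Writing $u\approx v$ for $[u]=[v]$ in $FT^1(X)$: (i) $g\approx g^cg\approx gg^c\approx gg^lg\approx gg^rg$ and $g^rgg^l\approx g^rg^cg^l$; (ii) $[gg^r],[gg^l],[g^rg],[g^lg]$ are idempotents of $FT(X)$; (iii) $[g^lg]\,\mathcal L\,[g^rg]\,\mathcal L\,[g]\,\mathcal R\,[gg^r]\,\mathcal R\,[gg^l]$ in $FT(X)$; (iv) $[g]\in S([g^rg^c],[g^cg^l])$; (v) $g_1\approx\beta_1(g_1)$.
   Context: Let $1$ be a symbol not in $X$. Elements of height $\ge 2$ are triples $g=(g^l,g^c,g^r)$; $\Gamma_0(X)=\{1\}$, $\Gamma_1(X)=X$, each $x\in X$ identified with $(1,x,1)$ (so $x^l=x^r=1$, $x^c=x$); for $i\ge 2$, $\Gamma_i(X)$ is the set of triples $g\in\Gamma_{i-1}(X)\times\Gamma_{i-2}(X)\times\Gamma_{i-1}(X)$ with $g^l\neq g^r$ and $g^c\in\{(g^l)^l,(g^l)^r\}\cap\{(g^r)^l,(g^r)^r\}$; $\Gamma(X)=\bigcup_{i\ge0}\Gamma_i(X)$, height of $g$ = the $i$ with $g\in\Gamma_i(X)$. Let $\rho$ be the smallest congruence on $\Gamma(X)^+$ containing $(1g,g),(g1,g),(gg,g)$ for all $g\in\Gamma(X)$ and $(g^cg^lg,g)$, $(gg^rg^c,g)$, $(g^rg^cgg^cg^l,g^rg^cg^l)$ for all $g$ of height $\ge2$.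 $FT^1(X)=\Gamma(X)^+/\rho$, $[u]$ the class of $u$, $FT(X)=FT^1(X)\setminus\{[1]\}$. For a word $w=x_1\cdots x_m$ over $\{l,c,r\}$, $g^{w}=(\cdots((g^{x_1})^{x_2})\cdots)^{x_m}$, e.g. $g^{c^{k}l}=((g^c)^{\cdots c})^l$ with $k$ letters $c$; $g^{c^0}=g$. For $g\neq1$: if $g$ has height $2n$, $\beta_1(g)=g^{c^n}g^{c^{n-1}l}g^{c^{n-1}}\cdots g^cg^lgg^rg^c\cdots g^{c^{n-1}}g^{c^{n-1}r}g^{c^n}$; if $g$ has height $2n+1$, $\beta_1(g)=1\,g^{c^n}g^{c^{n-1}l}g^{c^{n-1}}\cdots g^cg^lgg^rg^c\cdots g^{c^{n-1}}g^{c^{n-1}r}g^{c^n}\,1$; and $\beta_1(1)=1$. $S(e,f)=\{h\in E: fh=h=he,\ ehf=ef\}$ is the sandwich set of idempotents $e,f$; $\mathcal L,\mathcal R$ are Green's relations. *)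

From Stdlib Require Import List.
Import ListNotations.
Set Implicit Arguments.

Section Free.
Variable X : Type.

(* Raw terms: the symbol 1, generators x (identified with (1,x,1)), triples. *)
Inductive tm : Type :=
| One : tm
| Gen : X -> tm
| Tri : tm -> tm -> tm -> tm.

Definition pl (t : tm) : tm :=
  match t with One => One | Gen _ => One | Tri l _ _ => l end.
Definition pc (t : tm) : tm :=
  match t with One => One | Gen x => Gen x | Tri _ c _ => c end.
Definition pr (t : tm) : tm :=
  match t with One => One | Gen _ => One | Tri _ _ r => r end.

Fixpoint inG (n : nat) (t : tm) {struct n} : Prop :=
  match n with
  | 0 => t = One
  | 1 => exists x, t = Gen x
  | S (S i as j) =>
      exists l c r, t = Tri l c r /\ inG j l /\ inG i c /\ inG j r /\
        l <> r /\ (c = pl l \/ c = pr l) /\ (c = pl r \/ c = pr r)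
  end.

Definition inGamma (t : tm) : Prop := exists i, inG i t.

Fixpoint cpow (k : nat) (g : tm) : tm :=
  match k with 0 => g | S m => pc (cpow m g) end.

(* rho : smallest congruence containing the generating pairs.  Words of
   Gamma(X)^+ are represented by (nonempty) lists of elements of Gamma(X). *)
Inductive rho : list tm -> list tm -> Prop :=
| rho_1l g : inGamma g -> rho [One; g] [g]
| rho_1r g : inGamma g -> rho [g; One] [g]
| rho_sq g : inGamma g -> rho [g; g] [g]
| rho_cl g : (exists i, inG (S (S i)) g) -> rho [pc g; pl g; g] [g]
| rho_rc g : (exists i, inG (S (S i)) g) -> rho [g; pr g; pc g] [g]
| rho_5 g : (exists i, inG (S (S i)) g) ->
    rho [pr g; pc g; g; pc g; pl g] [pr g; pc g; pl g]
| rho_refl u : rho u u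
| rho_sym u v : rho u v -> rho v u
| rho_trans u v w : rho u v -> rho v w -> rho u w
| rho_ctx a u v b : rho u v -> rho (a ++ u ++ b) (a ++ v ++ b).

Definition Gword (s : list tm) : Prop := s <> [] /\ Forall inGamma s.

(* [u] lies in FT(X) = FT^1(X) \ {[1]} *)
Definition inFT (u : list tm) : Prop := ~ rho u [One].

Definition idem (u : list tm) : Prop := inFT u /\ rho (u ++ u) u.

(* Green's relations on FT(X); multipliers range over FT^1(X) = FT(X)^1
   ([One] plays the role of the adjoined identity). *)
Definition Lrel (a b : list tm) : Prop :=
  inFT a /\ inFT b /\
  exists s t, Gword s /\ Gword t /\ rho (s ++ a) b /\ rho (t ++ b) a.
Definition Rrel (a b : list tm) : Prop :=
  inFT a /\ inFT b /\
  exists s t, Gword s /\ Gword t /\ rho (a ++ s) b /\ rho (b ++ t) a.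

Definition sandwich (e f h : list tm) : Prop :=
  idem e /\ idem f /\ idem h /\
  rho (f ++ h) h /\ rho (h ++ e) h /\ rho (e ++ h ++ f) (e ++ f).

Fixpoint bleft (n : nat) (g : tm) : list tm :=
  match n with 0 => [] | S m => cpow (S m) g :: pl (cpow m g) :: bleft m g end.
Fixpoint bright (n : nat) (g : tm) : list tm :=
  match n with 0 => [] | S m => bright m g ++ [pr (cpow m g); cpow (S m) g] end.
Definition bcore (n : nat) (g : tm) : list tm := bleft n g ++ g :: bright n g.

(* beta1 h g, where h is the height of g *)
Definition beta1 (h : nat) (g : tm) : list tm :=
  match h with
  | 0 => [One]
  | S _ => if Nat.even h then bcore (Nat.div2 h) g
           else One :: bcore (Nat.div2 h) g ++ [One]
  end.
End Free.

Arguments One {X}.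

(* For g of height
   >= 2, g^c g^l g ~ g and g^c g^c ~ g^c give g^c g ~ g, symmetrically g g^c ~ g,
   and hence g g^l g ~ g ~ g g^r g.  Each identity g p g ~ g (p = g^l, g^r) makes
   g p and p g idempotent, p g L-related and g p R-related to g; the fifth relation
   then gives g^r g g^l ~ g^r g^c g^l and the sandwich property.  For (v), iterating
   g^c g ~ g down the chain g, g^c, g^{cc}, ... yields g^{c^k} g ~ g ~ g g^{c^k},
   which collapses beta_1(g) one layer g^{c^{k+1}} g^{c^k l} _ g^{c^k r} g^{c^{k+1}}
   at a time.  That the classes involved differ from [1] holds because no
   generating pair relates a word made of 1's to one with a letter <> 1. *)

From Stdlib Require Import List Arith Lia.
Import ListNotations.

Section Free.
Context {X : Type}.
Implicit Types (g t h p : tm X) (u v w : list (tm X)).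

Lemma inG_inGamma {n t} : inG n t -> inGamma t.
Proof. intro H; exists n; exact H. Qed.

Lemma inG_S_neq_One {i t} : inG (S i) t -> t <> One.
Proof.
  destruct i as [|i]; cbn [inG].
  - intros [x ->]; discriminate.
  - intros (l & c & r & -> & _); discriminate.
Qed.

Lemma inG_SS_inv {i t} : inG (S (S i)) t ->
  inG (S i) (pl t) /\ inG i (pc t) /\ inG (S i) (pr t) /\
  (pc t = pl (pl t) \/ pc t = pr (pl t)) /\ (pc t = pl (pr t) \/ pc t = pr (pr t)).
Proof. intros (l & c & r & -> & Hl & Hc & Hr & _ & Hcl & Hcr); simpl; auto. Qed.

Lemma inGamma_side {i h p} : inG (S i) h -> p = pl h \/ p = pr h -> inGamma p.
Proof.
  destruct i as [|i]; intros Hh Hp.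
  - destruct Hh as [x ->]. exists 0. destruct Hp as [-> | ->]; reflexivity.
  - destruct (inG_SS_inv Hh) as (Hl & _ & Hr & _).
    destruct Hp as [-> | ->]; eapply inG_inGamma; eassumption.
Qed.

Lemma rho_all_One_iff u v : rho u v -> (Forall (fun t => t = One) u <-> Forall (fun t => t = One) v).
Proof.
  induction 1; rewrite ?Forall_app, ?Forall_cons_iff in *; try tauto.
  (* Apart from the unit laws, both sides of each generating pair contain a letter
     of height >= 1: g, or g^r for the fifth relation. *)
  all: destruct H as [i Hi];
    pose proof (inG_S_neq_One Hi);
    pose proof (inG_S_neq_One (proj1 (proj2 (proj2 (inG_SS_inv Hi)))));
    tauto.
Qed.

Lemma inFT_of_In t u : In t u -> t <> One -> inFT u.
Proof.
  intros Ht Hne R.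
  apply rho_all_One_iff in R.
  assert (Hu : Forall (fun t => t = One) u) by (apply R; repeat constructor).
  exact (Hne (proj1 (Forall_forall _ _) Hu t Ht)).
Qed.

Lemma rho_ctx_eq a u v b w1 w2 :
  rho u v -> w1 = a ++ u ++ b -> w2 = a ++ v ++ b -> rho w1 w2.
Proof. intros H -> ->. apply rho_ctx; exact H. Qed.

Lemma rho_app {u u' v v'} : rho u u' -> rho v v' -> rho (u ++ v) (u' ++ v').
Proof.
  intros Hu Hv. apply rho_trans with (u' ++ v).
  - exact (rho_ctx_eq [] u u' v _ _ Hu eq_refl eq_refl).
  - apply (rho_ctx_eq u' v v' [] _ _ Hv); rewrite app_nil_r; reflexivity.
Qed.

Tactic Notation "rho_rw" uconstr(a) uconstr(b) uconstr(H) :=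
  eapply rho_trans; [refine (rho_ctx_eq a _ _ b _ _ H _ _); reflexivity |].

Lemma idem_single t : inGamma t -> t <> One -> idem [t].
Proof.
  intros Ht Hne. split.
  - apply (inFT_of_In t); [left |]; auto.
  - exact (rho_sq Ht).
Qed.

Lemma idem_app_l {u v} : rho (u ++ v ++ u) u -> inFT (v ++ u) -> idem (v ++ u).
Proof.
  intros H Hft. split; [exact Hft |].
  apply (rho_ctx_eq v _ _ [] _ _ H); rewrite ?app_nil_r, <- ?app_assoc; reflexivity.
Qed.

Lemma idem_app_r {u v} : rho (u ++ v ++ u) u -> inFT (u ++ v) -> idem (u ++ v).
Proof.
  intros H Hft. split; [exact Hft |].
  apply (rho_ctx_eq [] _ _ v _ _ H); rewrite <- ?app_assoc; reflexivity.
Qed.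

Lemma Gword_single t : inGamma t -> Gword [t].
Proof. intro Ht. split; [discriminate | repeat constructor; exact Ht]. Qed.

Lemma Gword_app {u v} : Gword u -> Gword v -> Gword (u ++ v).
Proof.
  intros [Hu Fu] [_ Fv]. split.
  - destruct u; [contradiction | discriminate].
  - apply Forall_app; auto.
Qed.

Lemma Lrel_sym {u v} : Lrel u v -> Lrel v u.
Proof.
  intros (Hu & Hv & s & t & Hs & Ht & Hsu & Htv).
  split; [exact Hv | split; [exact Hu |]]. exists t, s. auto.
Qed.

Lemma Lrel_trans {u v w} : Lrel u v -> Lrel v w -> Lrel u w.
Proof.
  intros (Hu & _ & s & t & Hs & Ht & Hsu & Htv) (_ & Hw & s' & t' & Hs' & Ht' & Hsv & Htw).
  split; [exact Hu | split; [exact Hw |]].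
  exists (s' ++ s), (t ++ t'). split; [apply Gword_app; auto |].
  split; [apply Gword_app; auto |]. split.
  - rewrite <- app_assoc. exact (rho_trans (rho_app (rho_refl s') Hsu) Hsv).
  - rewrite <- app_assoc. exact (rho_trans (rho_app (rho_refl t) Htw) Htv).
Qed.

Lemma Rrel_sym {u v} : Rrel u v -> Rrel v u.
Proof.
  intros (Hu & Hv & s & t & Hs & Ht & Hus & Hvt).
  split; [exact Hv | split; [exact Hu |]]. exists t, s. auto.
Qed.

Lemma Rrel_trans {u v w} : Rrel u v -> Rrel v w -> Rrel u w.
Proof.
  intros (Hu & _ & s & t & Hs & Ht & Hus & Hvt) (_ & Hw & s' & t' & Hs' & Ht' & Hvs & Hwt).
  split; [exact Hu | split; [exact Hw |]].
  exists (s ++ s'), (t' ++ t). split; [apply Gword_app; auto |].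
  split; [apply Gword_app; auto |]. split.
  - rewrite app_assoc. exact (rho_trans (rho_app Hus (rho_refl s')) Hvs).
  - rewrite app_assoc. exact (rho_trans (rho_app Hwt (rho_refl t)) Hvt).
Qed.

Lemma Lrel_app_l {u v} : Gword u -> Gword v -> rho (u ++ v ++ u) u ->
  inFT (v ++ u) -> inFT u -> Lrel (v ++ u) u.
Proof.
  intros Gu Gv H Hvu Hu. split; [exact Hvu | split; [exact Hu |]].
  exists u, v. split; [exact Gu | split; [exact Gv | split; [exact H | apply rho_refl]]].
Qed.

Lemma Rrel_app_r {u v} : Gword u -> Gword v -> rho (u ++ v ++ u) u ->
  inFT u -> inFT (u ++ v) -> Rrel u (u ++ v).
Proof.
  intros Gu Gv H Hu Huv. split; [exact Hu | split; [exact Huv |]].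
  exists v, u. split; [exact Gv | split; [exact Gu | split; [apply rho_refl |]]].
  rewrite <- app_assoc; exact H.
Qed.

Section Tall.
Variable g : tm X.
Hypothesis Hg : exists i, inG (S (S i)) g.

Let Gg : inGamma g.
Proof. destruct Hg as [i Hi]. exact (inG_inGamma Hi). Qed.
Let Gc : inGamma (pc g).
Proof. destruct Hg as [i Hi]. exact (inG_inGamma (proj1 (proj2 (inG_SS_inv Hi)))). Qed.

Lemma rho_pc_g : rho [pc g; g] [g].
Proof.
  rho_rw [pc g] [] (rho_sym (rho_cl Hg)).
  rho_rw [] [pl g; g] (rho_sq Gc).
  exact (rho_cl Hg).
Qed.

Lemma rho_g_pc : rho [g; pc g] [g].
Proof.
  rho_rw [] [pc g] (rho_sym (rho_rc Hg)).
  rho_rw [g; pr g] [] (rho_sq Gc).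
  exact (rho_rc Hg).
Qed.

Lemma rho_g_pl_g : rho [g; pl g; g] [g].
Proof.
  rho_rw [] [pl g; g] (rho_sym rho_g_pc).
  rho_rw [g] [] (rho_cl Hg).
  exact (rho_sq Gg).
Qed.

Lemma rho_g_pr_g : rho [g; pr g; g] [g].
Proof.
  rho_rw [g; pr g] [] (rho_sym rho_pc_g).
  rho_rw [] [g] (rho_rc Hg).
  exact (rho_sq Gg).
Qed.

Lemma rho_pr_g_pl : rho [pr g; g; pl g] [pr g; pc g; pl g].
Proof.
  rho_rw [pr g] [pl g] (rho_sym rho_pc_g).
  rho_rw [pr g; pc g] [pl g] (rho_sym rho_g_pc).
  exact (rho_5 Hg).
Qed.

End Tall.

Lemma rho_g_side_g {i h p} : inG (S i) h -> p = pl h \/ p = pr h -> rho [h; p; h] [h].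
Proof.
  destruct i as [|i]; intros Hh Hp.
  - assert (Gh : inGamma h) by exact (inG_inGamma Hh).
    destruct Hh as [x ->].
    assert (Hp1 : p = One) by (destruct Hp; assumption). subst p.
    rho_rw [Gen x] [] (rho_1l Gh).
    exact (rho_sq Gh).
  - destruct Hp as [-> | ->].
    + exact (rho_g_pl_g h (ex_intro _ i Hh)).
    + exact (rho_g_pr_g h (ex_intro _ i Hh)).
Qed.

Section Side.
Context {i : nat} {h p : tm X}.
Hypotheses (Hh : inG (S i) h) (Hp : p = pl h \/ p = pr h).

Let Hne : h <> One := inG_S_neq_One Hh.
Let Gh : Gword [h] := Gword_single h (inG_inGamma Hh).
Let Gp : Gword [p] := Gword_single p (inGamma_side Hh Hp).

Let inFT_h : inFT [h].
Proof. apply (inFT_of_In h); simpl; auto. Qed.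
Let inFT_h_p : inFT [h; p].
Proof. apply (inFT_of_In h); simpl; auto. Qed.
Let inFT_p_h : inFT [p; h].
Proof. apply (inFT_of_In h); simpl; auto. Qed.

Lemma idem_g_side : idem [h; p].
Proof. exact (idem_app_r (u := [h]) (v := [p]) (rho_g_side_g Hh Hp) inFT_h_p). Qed.

Lemma idem_side_g : idem [p; h].
Proof. exact (idem_app_l (u := [h]) (v := [p]) (rho_g_side_g Hh Hp) inFT_p_h). Qed.

Lemma Lrel_side_g : Lrel [p; h] [h].
Proof. exact (Lrel_app_l (u := [h]) (v := [p]) Gh Gp (rho_g_side_g Hh Hp) inFT_p_h inFT_h). Qed.

Lemma Rrel_g_side : Rrel [h] [h; p].
Proof. exact (Rrel_app_r (u := [h]) (v := [p]) Gh Gp (rho_g_side_g Hh Hp) inFT_h inFT_h_p). Qed.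

End Side.

Lemma sandwich_g {i g} : inG (S (S i)) g -> sandwich [pr g; pc g] [pc g; pl g] [g].
Proof.
  intro Hi. assert (Hg : exists j, inG (S (S j)) g) by (exists i; exact Hi).
  destruct (inG_SS_inv Hi) as (Hl & Hc & Hr & Hcl & Hcr).
  split; [exact (idem_g_side Hr Hcr) |].
  split; [exact (idem_side_g Hl Hcl) |].
  split; [exact (idem_single g (inG_inGamma Hi) (inG_S_neq_One Hi)) |].
  split; [exact (rho_cl Hg) |].
  split; [exact (rho_rc Hg) |].
  apply rho_trans with [pr g; pc g; pl g]; [exact (rho_5 Hg) |].
  rho_rw [pr g] [pl g] (rho_sym (rho_sq (inG_inGamma Hc))).
  apply rho_refl.
Qed.

Lemma inG_cpow {n g} k : inG n g -> 2 * k <= n -> inG (n - 2 * k) (cpow k g).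
Proof.
  intro H. induction k as [|k IH]; intro Hk.
  - replace (n - 2 * 0) with n by lia. exact H.
  - assert (E : n - 2 * k = S (S (n - 2 * S k))) by lia.
    specialize (IH ltac:(lia)). rewrite E in IH.
    exact (proj1 (proj2 (inG_SS_inv IH))).
Qed.

(* Along the c-chain: for a = g^{c^k}, a^c g ~ a^c a g ~ a g ~ g. *)
Lemma rho_cpow_g {n g} k : inG n g -> 2 * k <= n -> rho [cpow k g; g] [g] /\ rho [g; cpow k g] [g].
Proof.
  intro H. induction k as [|k IH]; intro Hk.
  - pose proof (rho_sq (inG_inGamma H)). auto.
  - destruct (IH ltac:(lia)) as [Hag Hga].
    assert (Ha : exists j, inG (S (S j)) (cpow k g)).
    { exists (n - 2 * S k). replace (S (S (n - 2 * S k))) with (n - 2 * k) by lia.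
      apply inG_cpow; [exact H | lia]. }
    simpl. split.
    + rho_rw [pc (cpow k g)] [] (rho_sym Hag).
      rho_rw [] [g] (rho_pc_g _ Ha).
      exact Hag.
    + rho_rw [] [pc (cpow k g)] (rho_sym Hga).
      rho_rw [g] [] (rho_g_pc _ Ha).
      exact Hga.
Qed.

Lemma bcore_S k g :
  bcore (S k) g = [pc (cpow k g); pl (cpow k g)] ++ bcore k g ++ [pr (cpow k g); pc (cpow k g)].
Proof. unfold bcore. simpl. rewrite <- app_assoc. reflexivity. Qed.

Lemma rho_layer {a g} : (exists j, inG (S (S j)) a) ->
  rho [a; g] [g] -> rho [g; a] [g] -> rho [pc a; pl a; g; pr a; pc a] [g].
Proof.
  intros Ha Hag Hga.
  rho_rw [pc a; pl a] [pr a; pc a] (rho_sym Hag).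
  rho_rw [] [g; pr a; pc a] (rho_cl Ha).
  rho_rw [a] [pr a; pc a] (rho_sym Hga).
  rho_rw [a; g] [] (rho_rc Ha).
  rho_rw [] [a] Hag.
  exact Hga.
Qed.

Lemma rho_bcore {n g} k : inG n g -> 2 * k <= n -> rho (bcore k g) [g].
Proof.
  intro H. induction k as [|k IH]; intro Hk; [apply rho_refl |].
  rewrite bcore_S.
  rho_rw [pc (cpow k g); pl (cpow k g)] [pr (cpow k g); pc (cpow k g)] (IH ltac:(lia)).
  destruct (rho_cpow_g k H ltac:(lia)) as [Hag Hga].
  apply rho_layer; [| exact Hag | exact Hga].
  exists (n - 2 * S k). replace (S (S (n - 2 * S k))) with (n - 2 * k) by lia.
  apply inG_cpow; [exact H | lia].
Qed.

Lemma rho_beta1 {n g} : inG n g -> rho [g] (beta1 n g).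
Proof.
  intro H. destruct n as [|n].
  - simpl in H. subst g. apply rho_refl.
  - pose proof (Nat.div2_odd (S n)) as Hdiv.
    assert (Hk : 2 * Nat.div2 (S n) <= S n) by lia.
    pose proof (rho_bcore _ H Hk) as Hcore.
    pose proof (inG_inGamma H) as Gg.
    unfold beta1. destruct (Nat.even (S n)); apply rho_sym; [exact Hcore |].
    rho_rw [One] [One] Hcore.
    rho_rw [] [One] (rho_1l Gg).
    exact (rho_1r Gg).
Qed.

End Free.

Theorem lemma3p1 (X : Type) (HX : inhabited X) (g g1 : tm X)
  (Hg : exists i, inG (S (S i)) g) (Hg1 : inGamma g1) :
  (* (i) *)
  (rho [g] [pc g; g] /\ rho [pc g; g] [g; pc g] /\ rho [g; pc g] [g; pl g; g] /\
   rho [g; pl g; g] [g; pr g; g] /\ rho [pr g; g; pl g] [pr g; pc g; pl g]) /\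
  (* (ii) *)
  (idem [g; pr g] /\ idem [g; pl g] /\ idem [pr g; g] /\ idem [pl g; g]) /\
  (* (iii) *)
  (Lrel [pl g; g] [pr g; g] /\ Lrel [pr g; g] [g] /\
   Rrel [g] [g; pr g] /\ Rrel [g; pr g] [g; pl g]) /\
  (* (iv) *)
  sandwich [pr g; pc g] [pc g; pl g] [g] /\
  (* (v) *)
  (forall h, inG h g1 -> rho [g1] (beta1 h g1)).
Proof.
  pose proof Hg as [i Hi].
  assert (Hl : pl g = pl g \/ pl g = pr g) by (left; reflexivity).
  assert (Hr : pr g = pl g \/ pr g = pr g) by (right; reflexivity).
  refine (conj _ (conj _ (conj _ (conj (sandwich_g Hi) (fun h => rho_beta1))))).
  - pose proof (rho_pc_g g Hg); pose proof (rho_g_pc g Hg).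
    pose proof (rho_g_pl_g g Hg); pose proof (rho_g_pr_g g Hg).
    repeat split; eauto using rho_sym, rho_trans, rho_pr_g_pl.
  - exact (conj (idem_g_side Hi Hr) (conj (idem_g_side Hi Hl)
             (conj (idem_side_g Hi Hr) (idem_side_g Hi Hl)))).
  - exact (conj (Lrel_trans (Lrel_side_g Hi Hl) (Lrel_sym (Lrel_side_g Hi Hr)))
           (conj (Lrel_side_g Hi Hr)
           (conj (Rrel_g_side Hi Hr)
                 (Rrel_trans (Rrel_sym (Rrel_g_side Hi Hr)) (Rrel_g_side Hi Hl))))).
Qed.
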